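(* Let $I\subset\mathbb{R}$ be an interval and let $M,N\colon I^2\to I$ be means. Then the mean-type mapping $(M,N)$ is weakly contractive if and only if the mean-type mapping $(M_2,N_2)$ is diagonally contractive, i.e. $|M_2(x,y)-N_2(x,y)|<|x-y|$ for all $x,y\in I$ with $x\neq y$.
   Context: A function $M\colon I^2\to\mathbb{R}$ is a mean in $I$ if $\min(x,y)\le M(x,y)\le\max(x,y)$ for all $x,y\in I$. For means $M,N\colon I^2\to I$, the mean-type mapping $(M,N)\colon I^2\to I^2$ is $(x,y)\mapsto(M(x,y),N(x,y))$, and for $n\in\mathbb{N}$ the functions $M_n,N_n\colon I^2\to I$ are defined by $(M_n,N_n):=(M,N)^n$ (the $n$-th iterate under composition). The mapping $(M,N)$ is weakly contractive if for all $x,y\in I$ with $x\ne y$ there exists a positive integer $n=n(x,y)$ such that $|M_n(x,y)-N_n(x,y)|<|x-y|$. *)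

From Stdlib Require Import Reals.
Open Scope R_scope.

Definition is_interval (I : R -> Prop) : Prop :=
  forall x y z, I x -> I y -> x <= z <= y -> I z.

(* M : I^2 -> I is a mean in I (functions are total on R^2; only values on I^2 matter). *)
Definition is_mean_on (I : R -> Prop) (M : R -> R -> R) : Prop :=
  (forall x y, I x -> I y -> I (M x y)) /\
  (forall x y, I x -> I y -> Rmin x y <= M x y <= Rmax x y).

Definition mt_map (M N : R -> R -> R) (p : R * R) : R * R :=
  (M (fst p) (snd p), N (fst p) (snd p)).

Fixpoint mt_iter (M N : R -> R -> R) (n : nat) (p : R * R) : R * R :=
  match n with
  | O => p
  | S k => mt_map M N (mt_iter M N k p)
  end.

Definition Mn (M N : R -> R -> R) (n : nat) (x y : R) : R := fst (mt_iter M N n (x, y)).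
Definition Nn (M N : R -> R -> R) (n : nat) (x y : R) : R := snd (mt_iter M N n (x, y)).

Definition weakly_contractive (I : R -> Prop) (M N : R -> R -> R) : Prop :=
  forall x y, I x -> I y -> x <> y ->
    exists n : nat, (0 < n)%nat /\ Rabs (Mn M N n x y - Nn M N n x y) < Rabs (x - y).

Definition diagonally_contractive (I : R -> Prop) (M N : R -> R -> R) : Prop :=
  forall x y, I x -> I y -> x <> y -> Rabs (M x y - N x y) < Rabs (x - y).

From Stdlib Require Import Reals Lra.
Open Scope R_scope.

(* Two points of [min(x,y), max(x,y)] are at distance at most |x - y|, with
   equality only for the endpoints, in either order.  Hence one step of (M,N)
   never increases the gap |u - v| of a pair (u,v), and a step that keeps it
   must send (u,v) to (u,v) or to (v,u).  If the second step does not shrink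
   the gap of (x,y), both steps keep it, so the orbit of (x,y) never leaves
   {(x,y), (y,x)} and no iterate is ever closer than |x - y|. *)

Definition gap (p : R * R) : R := Rabs (fst p - snd p).

Definition pair_swap (p : R * R) : R * R := (snd p, fst p).

Lemma pair_swap_involutive (p : R * R) : pair_swap (pair_swap p) = p.
Proof. now destruct p. Qed.

Lemma gap_pair_swap (p : R * R) : gap (pair_swap p) = gap p.
Proof. apply Rabs_minus_sym. Qed.

Lemma Rabs_sub_between_le (x y a b : R) :
  Rmin x y <= a <= Rmax x y -> Rmin x y <= b <= Rmax x y ->
  Rabs (a - b) <= Rabs (x - y).
Proof.
  unfold Rmin, Rmax; destruct (Rle_dec x y);
  unfold Rabs; repeat destruct Rcase_abs; lra.
Qed.

Lemma Rabs_sub_between_eq (x y a b : R) : x <> y ->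
  Rmin x y <= a <= Rmax x y -> Rmin x y <= b <= Rmax x y ->
  Rabs (x - y) <= Rabs (a - b) ->
  (a = x /\ b = y) \/ (a = y /\ b = x).
Proof.
  intro Hxy; unfold Rmin, Rmax; destruct (Rle_dec x y);
  unfold Rabs; repeat destruct Rcase_abs; intros; lra.
Qed.

Lemma mt_iter_two_cycle (M N : R -> R -> R) (p : R * R) :
  mt_iter M N 2 p = p \/ mt_iter M N 2 p = mt_map M N p ->
  forall n, mt_iter M N n p = p \/ mt_iter M N n p = mt_map M N p.
Proof.
  intros H2 n; induction n as [|n [Hn | Hn]]; simpl.
  - now left.
  - rewrite Hn; now right.
  - rewrite Hn; exact H2.
Qed.

Section MeanTypeMapping.

Variables (I : R -> Prop) (M N : R -> R -> R).
Hypotheses (HM : is_mean_on I M) (HN : is_mean_on I N).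

Definition in_square (p : R * R) : Prop := I (fst p) /\ I (snd p).

Lemma mt_map_in_square (p : R * R) :
  in_square p -> in_square (mt_map M N p).
Proof.
  intros [Ix Iy]; split; [apply HM | apply HN]; assumption.
Qed.

Lemma gap_mt_map_le (p : R * R) : in_square p -> gap (mt_map M N p) <= gap p.
Proof.
  intros [Ix Iy]; apply Rabs_sub_between_le; [apply HM | apply HN]; assumption.
Qed.

Lemma mt_map_gap_rigid (p : R * R) :
  in_square p -> fst p <> snd p -> gap p <= gap (mt_map M N p) ->
  mt_map M N p = p \/ mt_map M N p = pair_swap p.
Proof.
  destruct p as [x y]; intros [Ix Iy] Hxy Hgap; unfold mt_map; simpl.
  destruct (Rabs_sub_between_eq x y (M x y) (N x y) Hxy)
    as [[-> ->] | [-> ->]]; try (apply HM || apply HN); auto.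
Qed.

Lemma gap_mt_iter_const (p : R * R) :
  in_square p -> fst p <> snd p -> gap p <= gap (mt_iter M N 2 p) ->
  forall n, gap (mt_iter M N n p) = gap p.
Proof.
  intros Sp Hp Hgap2.
  change (mt_iter M N 2 p) with (mt_map M N (mt_map M N p)) in Hgap2.
  assert (Sq := mt_map_in_square p Sp).
  assert (Hpq := gap_mt_map_le p Sp).
  assert (Hqq := gap_mt_map_le _ Sq).
  assert (Hq : mt_map M N p = p \/ mt_map M N p = pair_swap p)
    by (apply mt_map_gap_rigid; auto; lra).
  assert (Horbit : forall n,
             mt_iter M N n p = p \/ mt_iter M N n p = mt_map M N p).
  { apply mt_iter_two_cycle.
    change (mt_iter M N 2 p) with (mt_map M N (mt_map M N p)).
    destruct Hq as [Hfix | Hswap].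
    - rewrite Hfix, Hfix; now left.
    - assert (Hq_neq : fst (mt_map M N p) <> snd (mt_map M N p))
        by (rewrite Hswap; simpl; auto).
      destruct (mt_map_gap_rigid _ Sq Hq_neq ltac:(lra)) as [Hq2 | Hq2];
        rewrite Hq2.
      + now right.
      + rewrite Hswap, pair_swap_involutive; now left. }
  assert (Hgq : gap (mt_map M N p) = gap p)
    by (destruct Hq as [-> | ->]; [reflexivity | apply gap_pair_swap]).
  intro n; destruct (Horbit n) as [-> | ->]; assumption || reflexivity.
Qed.

End MeanTypeMapping.

Theorem mainTheorem2 (I : R -> Prop) (M N : R -> R -> R) :
  is_interval I -> is_mean_on I M -> is_mean_on I N ->
  (weakly_contractive I M N <->
   diagonally_contractive I (Mn M N 2) (Nn M N 2)).
Proof.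
  intros _ HM HN; split.
  - intros Hweak x y Ix Iy Hxy.
    apply Rnot_le_lt; intro Hgap2.
    destruct (Hweak x y Ix Iy Hxy) as [n [_ Hn]].
    assert (Hconst : gap (mt_iter M N n (x, y)) = gap (x, y)).
    { apply (gap_mt_iter_const I); auto; split; auto. }
    unfold gap, Mn, Nn in *; simpl in Hconst; lra.
  - intros Hdiag x y Ix Iy Hxy.
    exists 2%nat; split; [auto | exact (Hdiag x y Ix Iy Hxy)].
Qed.
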